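(* Let $b \geq 2$ be an integer and let $a_1a_2a_3\ldots$ be an infinite de Bruijn word over the alphabet $\{0,1,\ldots,b-1\}$. Let $\alpha = 0.a_1a_2a_3\ldots$ be the real number with base-$b$ digits $a_1,a_2,\ldots$, i.e. $\alpha=\sum_{k\ge1}a_k b^{-k}$. Then the sequence $(\{b^n \alpha\})_{n \in \mathbb{N}}$ does not have Poissonian pair correlations.
   Context: $\{x\}$ denotes the fractional part of $x$ and $\|x\|$ the distance from $x$ to the nearest integer. A sequence $(x_n)_{n\in\mathbb{N}}$ in $[0,1)$ has Poissonian pair correlations if for every $s \geq 0$, $F_N(s) := \frac{1}{N}\#\{1 \leq l \neq m \leq N : \|x_l - x_m\| \leq s/N\} \to 2s$ as $N\to\infty$. A (non-cyclic) de Bruijn word of order $m$ over an alphabet $A$ is a word of length $|A|^m+m-1$ in which every word of length $m$ over $A$ occurs (as a factor of consecutive letters) exactly once. An infinite de Bruijn word $w=a_1a_2\ldots$ over an alphabet $A$ with at least three symbols is an infinite word such that for every $m$, $a_1\ldots a_{|A|^m+m-1}$ is a de Bruijn word of order $m$; if the alphabet has two symbols, it is an infinite word such that for every odd $m$, $a_1\ldots a_{|A|^m+m-1}$ is a de Bruijn word of order $m$. *)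

From Stdlib Require Import Reals Lra Lia List Arith.
Import ListNotations.
Open Scope R_scope.

Definition frac (x : R) : R := frac_part x.

Definition dist_int (x : R) : R := Rmin (frac x) (1 - frac x).

(* #{ 1 <= l <> m <= N : ||x_l - x_m|| <= s/N }, the sequence being indexed
   from 0 in Rocq, so the first N terms are x 0, ..., x (N-1). *)
Definition pair_count (x : nat -> R) (N : nat) (s : R) : nat :=
  length (filter
    (fun p : nat * nat =>
       if Nat.eqb (fst p) (snd p) then false
       else if Rle_dec (dist_int (x (fst p) - x (snd p))) (s / INR N)
            then true else false)
    (list_prod (seq 0 N) (seq 0 N))).

Definition F_N (x : nat -> R) (N : nat) (s : R) : R :=
  / INR N * INR (pair_count x N s).

Definition poissonian_pc (x : nat -> R) : Prop :=
  forall s : R, 0 <= s -> Un_cv (fun N => F_N x N s) (2 * s).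

(* w (0-indexed: w 0 = a_1) restricted to its first b^m+m-1 letters is a
   de Bruijn word of order m over {0,...,b-1}: every word u of length m
   over the alphabet occurs exactly once as a factor, i.e. there is a unique
   start position i with i + m <= b^m + m - 1. *)
Definition debruijn_prefix (b : nat) (w : nat -> nat) (m : nat) : Prop :=
  (forall k, (k < b ^ m + m - 1)%nat -> (w k < b)%nat) /\
  forall u : list nat, length u = m -> Forall (fun d => (d < b)%nat) u ->
    exists! i : nat, (i + m <= b ^ m + m - 1)%nat /\
      forall j : nat, (j < m)%nat -> w (i + j)%nat = nth j u 0%nat.

Definition infinite_debruijn (b : nat) (w : nat -> nat) : Prop :=
  (forall k, (w k < b)%nat) /\
  (if Nat.eqb b 2
   then forall m : nat, Nat.odd m = true -> debruijn_prefix b w m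
   else forall m : nat, debruijn_prefix b w m).

(** Choose m with a_1 ... a_(b^m+m-1) a de Bruijn word of order m and put N = b^m.
    The windows a_(n+1) ... a_(n+m), n < N, are then all distinct, so writing
    N x_n = c_n + f_n with c_n the integer value of the window and 0 <= f_n < 1, the points
    x_n = {b^n alpha}, n < N, occupy each cell [j/N, (j+1)/N) exactly once.  Two of them are
    within s/N < 1/N only if their cells are cyclically adjacent and the offset f drops by at
    least 1 - s from the lower cell to the upper one.  These N drops sum to zero around the
    cycle and each exceeds -1, so F_N(1/2) close to 1 and F_N(9/10) close to 9/5, which
    force more than 9N/20 drops >= 1/2 and more than 17N/20 drops >= 1/10, cannot hold
    together. *)

From Stdlib Require Import Reals Lra Lia List Arith ZArith.
Import ListNotations.
Open Scope R_scope.

Lemma NoDup_list_prod {A B : Type} (l : list A) (l' : list B) :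
  NoDup l -> NoDup l' -> NoDup (list_prod l l').
Proof.
  intros Hl Hl'. induction Hl as [|a l Ha Hl IH]; simpl; [constructor|].
  apply NoDup_app; auto.
  - apply NoDup_map_NoDup_ForallPairs; auto. intros y y' _ _ E. injection E; auto.
  - intros [a' y] Hin Hin'. apply in_map_iff in Hin as [z [Ez _]]. injection Ez as <- <-.
    apply in_prod_iff in Hin' as [Hin' _]. contradiction.
Qed.

Lemma dist_int_le_near_int y r : dist_int y <= r -> exists k : Z, Rabs (y - IZR k) <= r.
Proof.
  unfold dist_int, frac, frac_part. intros Hd.
  destruct (base_Int_part y) as [Hlo Hhi].
  destruct (Rle_dec (y - IZR (Int_part y)) (1 - (y - IZR (Int_part y)))) as [Hle|Hgt].
  - rewrite Rmin_left in Hd by exact Hle. exists (Int_part y).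
    rewrite Rabs_right; lra.
  - rewrite Rmin_right in Hd by lra. exists (Int_part y + 1)%Z.
    rewrite plus_IZR, Rabs_left1; simpl; lra.
Qed.

Definition cyc_succ (N j : nat) : nat := if Nat.eqb (S j) N then 0%nat else S j.

Lemma cyc_adjacent (N a a' : nat) (k t : Z) :
  (a < N)%nat -> (a' < N)%nat -> a <> a' ->
  (Z.of_nat a - Z.of_nat a' - k * Z.of_nat N)%Z = t -> (-2 < t < 2)%Z ->
  (t = 1%Z /\ a = cyc_succ N a') \/ (t = (-1)%Z /\ a' = cyc_succ N a).
Proof.
  intros Ha Ha' Hne Et Ht.
  assert (Hk : (k = 0 \/ k = 1 \/ k = -1)%Z) by nia.
  unfold cyc_succ.
  destruct (Nat.eqb_spec (S a') N), (Nat.eqb_spec (S a) N);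
    destruct Hk as [-> | [-> | ->]]; lia.
Qed.

Definition sumR (g : nat -> R) (l : list nat) : R := fold_right (fun j acc => g j + acc) 0 l.

Lemma sumR_app g l l' : sumR g (l ++ l') = sumR g l + sumR g l'.
Proof. induction l as [|j l IH]; simpl; [lra|]. rewrite IH. lra. Qed.

Lemma sumR_ext g g' l : (forall j, In j l -> g j = g' j) -> sumR g l = sumR g' l.
Proof.
  induction l as [|j l IH]; intros H; simpl; [reflexivity|].
  rewrite H, IH; auto with datatypes.
Qed.

Lemma sumR_telescope (g : nat -> R) a K :
  sumR (fun j => g j - g (S j)) (seq a K) = g a - g (a + K)%nat.
Proof.
  revert a; induction K as [|K IH]; intros a; simpl.
  - rewrite Nat.add_0_r. lra.
  - rewrite IH, <- Nat.add_succ_comm. lra.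
Qed.

Lemma sumR_cyc_telescope (g : nat -> R) N : (0 < N)%nat ->
  sumR (fun j => g j - g (cyc_succ N j)) (seq 0 N) = 0.
Proof.
  intros HN. destruct N as [|K]; [lia|].
  rewrite seq_S, sumR_app.
  rewrite (sumR_ext _ (fun j => g j - g (S j))).
  - rewrite sumR_telescope. unfold cyc_succ. simpl.
    rewrite Nat.eqb_refl. lra.
  - intros j Hj. apply in_seq in Hj. unfold cyc_succ.
    destruct (Nat.eqb_spec (S j) (S K)); [lia | reflexivity].
Qed.

Definition count_ge (d : nat -> R) (t : R) (l : list nat) : nat :=
  length (filter (fun j => if Rle_dec t (d j) then true else false) l).

Lemma weighted_count_ge_le_sumR (d : nat -> R) (l : list nat) :
  (forall j, In j l -> -1 < d j) ->
  2/5 * INR (count_ge d (1/2) l) + 11/10 * INR (count_ge d (1/10) l) - INR (length l)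
  <= sumR d l.
Proof.
  unfold count_ge. induction l as [|j l IH]; intros Hd; [simpl; lra|].
  assert (Hj : -1 < d j) by auto with datatypes.
  specialize (IH (fun i Hi => Hd i (in_cons j i l Hi))).
  cbn [filter sumR fold_right length]. fold (sumR d l).
  destruct (Rle_dec (1/2) (d j)); destruct (Rle_dec (1/10) (d j));
    cbn [length]; rewrite ?S_INR; lra.
Qed.

Section OnePointPerCell.

Variables (N : nat) (x : nat -> R) (c : nat -> nat) (f : nat -> R).
Hypothesis N_pos : (0 < N)%nat.
Hypothesis cell_lt : forall n, (n < N)%nat -> (c n < N)%nat.
Hypothesis cell_inj : forall n n', (n < N)%nat -> (n' < N)%nat -> c n = c n' -> n = n'.
Hypothesis point_in_cell : forall n, (n < N)%nat -> x n * INR N = INR (c n) + f n.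
Hypothesis offset_range : forall n, (n < N)%nat -> 0 <= f n < 1.

Definition occupant (j : nat) : nat := hd 0%nat (filter (fun n => Nat.eqb (c n) j) (seq 0 N)).

Lemma occupant_lt j : (occupant j < N)%nat.
Proof.
  unfold occupant.
  destruct (filter (fun n => Nat.eqb (c n) j) (seq 0 N)) as [|n l] eqn:E; simpl; [exact N_pos|].
  assert (Hn : In n (filter (fun n => Nat.eqb (c n) j) (seq 0 N))) by (rewrite E; left; reflexivity).
  apply filter_In in Hn as [Hn _]. apply in_seq in Hn. lia.
Qed.

Lemma occupant_cell n : (n < N)%nat -> occupant (c n) = n.
Proof.
  intros Hn. unfold occupant.
  destruct (filter (fun n' => Nat.eqb (c n') (c n)) (seq 0 N)) as [|n' l] eqn:E.
  - assert (Hin : In n (filter (fun n' => Nat.eqb (c n') (c n)) (seq 0 N))).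
    { apply filter_In. split; [apply in_seq; lia | apply Nat.eqb_refl]. }
    rewrite E in Hin. destruct Hin.
  - assert (Hn' : In n' (filter (fun n' => Nat.eqb (c n') (c n)) (seq 0 N))) by (rewrite E; left; reflexivity).
    apply filter_In in Hn' as [Hn' Hc]. apply in_seq in Hn'. apply Nat.eqb_eq in Hc.
    simpl. apply cell_inj; [lia | exact Hn | exact Hc].
Qed.

Definition drop (j : nat) : R := f (occupant j) - f (occupant (cyc_succ N j)).

Lemma close_points_adjacent l l' s :
  (l < N)%nat -> (l' < N)%nat -> l <> l' -> 0 < s < 1 ->
  dist_int (x l - x l') <= s / INR N ->
  (c l = cyc_succ N (c l') /\ 1 - s <= f l' - f l) \/
  (c l' = cyc_succ N (c l) /\ 1 - s <= f l - f l').
Proof.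
  intros Hl Hl' Hne Hs Hd.
  assert (HNR : 0 < INR N) by (apply lt_0_INR; exact N_pos).
  destruct (dist_int_le_near_int _ _ Hd) as [k Hk].
  set (t := (Z.of_nat (c l) - Z.of_nat (c l') - k * Z.of_nat N)%Z).
  assert (Et : (x l - x l' - IZR k) * INR N = IZR t + f l - f l').
  { unfold t. rewrite !minus_IZR, mult_IZR, <- !INR_IZR_INZ.
    replace ((x l - x l' - IZR k) * INR N) with (x l * INR N - x l' * INR N - IZR k * INR N) by ring.
    rewrite !point_in_cell by assumption. ring. }
  assert (Hscaled : Rabs ((x l - x l' - IZR k) * INR N) <= s).
  { rewrite Rabs_mult, (Rabs_right (INR N)) by lra.
    replace s with (s / INR N * INR N) by (field; lra).
    apply Rmult_le_compat_r; lra. }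
  rewrite Et in Hscaled.
  assert (Hlo := Rle_abs (- (IZR t + f l - f l'))). rewrite Rabs_Ropp in Hlo.
  assert (Hhi := Rle_abs (IZR t + f l - f l')).
  pose proof (offset_range l Hl). pose proof (offset_range l' Hl').
  assert (Ht : (-2 < t < 2)%Z) by (split; apply lt_IZR; simpl; lra).
  assert (Hcne : c l <> c l') by (intros E; apply Hne, cell_inj; assumption).
  destruct (cyc_adjacent N (c l) (c l') k t (cell_lt l Hl) (cell_lt l' Hl') Hcne eq_refl Ht)
    as [[-> Hadj] | [-> Hadj]]; simpl in Hscaled; [left | right]; split; (assumption || lra).
Qed.

Lemma pair_count_le_drops s : 0 < s < 1 ->
  (pair_count x N s <= 2 * count_ge drop (1 - s) (seq 0 N))%nat.
Proof.
  intros Hs. unfold pair_count, count_ge.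
  set (large := fun j => if Rle_dec (1 - s) (drop j) then true else false).
  set (pairs := fun j => [(occupant (cyc_succ N j), occupant j); (occupant j, occupant (cyc_succ N j))]).
  replace (2 * length (filter large (seq 0 N)))%nat
    with (length (flat_map pairs (filter large (seq 0 N))))
    by (rewrite (flat_map_constant_length (c := 2%nat)); [lia | reflexivity]).
  apply NoDup_incl_length.
  { apply NoDup_filter, NoDup_list_prod; apply seq_NoDup. }
  assert (Hwitness : forall l l', (l < N)%nat -> (l' < N)%nat ->
            c l = cyc_succ N (c l') -> 1 - s <= f l' - f l ->
            In (c l') (filter large (seq 0 N)) /\ In (l, l') (pairs (c l')) /\
            In (l', l) (pairs (c l'))).
  { intros l l' Hl Hl' Ec Hdrop. unfold pairs. rewrite <- Ec, !occupant_cell by assumption.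
    split; [|simpl; auto].
    apply filter_In. split; [apply in_seq; pose proof (cell_lt l' Hl'); lia|].
    unfold large, drop. rewrite <- Ec, !occupant_cell by assumption.
    destruct (Rle_dec _ _); [reflexivity | lra]. }
  intros [l l'] Hin. apply filter_In in Hin as [Hin Hclose].
  apply in_prod_iff in Hin as [Hl Hl']. apply in_seq in Hl, Hl'. cbn [fst snd] in Hclose.
  destruct (Nat.eqb_spec l l') as [|Hne]; [discriminate|].
  destruct (Rle_dec _ _) as [Hd|]; [|discriminate].
  apply in_flat_map.
  destruct (close_points_adjacent l l' s ltac:(lia) ltac:(lia) Hne Hs Hd)
    as [[Ec Hdrop] | [Ec Hdrop]].
  - destruct (Hwitness l l' ltac:(lia) ltac:(lia) Ec Hdrop) as [Hj [Hpair _]].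
    exists (c l'). split; assumption.
  - destruct (Hwitness l' l ltac:(lia) ltac:(lia) Ec Hdrop) as [Hj [_ Hpair]].
    exists (c l). split; assumption.
Qed.

Lemma weighted_large_drops_le :
  2/5 * INR (count_ge drop (1/2) (seq 0 N)) + 11/10 * INR (count_ge drop (1/10) (seq 0 N))
  <= INR N.
Proof.
  pose proof (weighted_count_ge_le_sumR drop (seq 0 N)) as Hw.
  assert (Hsum : sumR drop (seq 0 N) = 0)
    by exact (sumR_cyc_telescope (fun j => f (occupant j)) N N_pos).
  rewrite Hsum, length_seq in Hw.
  cut (forall j, In j (seq 0 N) -> -1 < drop j); [intros Hgt; specialize (Hw Hgt); lra|].
  intros j _. unfold drop.
  pose proof (offset_range _ (occupant_lt j)).
  pose proof (offset_range _ (occupant_lt (cyc_succ N j))). lra.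
Qed.

(* The weights 2/5 and 11/10 of [weighted_count_ge_le_sumR] are chosen so that
   2/5 * 9/20 + 11/10 * 17/20 > 1. *)
Theorem one_point_per_cell_pair_correlation :
  F_N x N (1/2) <= 9/10 \/ F_N x N (9/10) <= 17/10.
Proof.
  assert (HNR : 0 < INR N) by (apply lt_0_INR; exact N_pos).
  pose proof (pair_count_le_drops (1/2) ltac:(lra)) as Hc1.
  pose proof (pair_count_le_drops (9/10) ltac:(lra)) as Hc2.
  replace (1 - 1/2) with (1/2) in Hc1 by lra. replace (1 - 9/10) with (1/10) in Hc2 by lra.
  apply le_INR in Hc1, Hc2. rewrite mult_INR in Hc1, Hc2. simpl (INR 2) in Hc1, Hc2.
  pose proof weighted_large_drops_le.
  assert (E1 : INR N * F_N x N (1/2) = INR (pair_count x N (1/2))) by (unfold F_N; field; lra).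
  assert (E2 : INR N * F_N x N (9/10) = INR (pair_count x N (9/10))) by (unfold F_N; field; lra).
  destruct (Rle_dec (F_N x N (1/2)) (9/10)) as [|H1]; [left; assumption|right].
  apply Rnot_le_lt in H1. apply Rnot_lt_le. intros H2.
  nra.
Qed.

End OnePointPerCell.

Lemma Un_cv_le_const (U : nat -> R) (l c : R) :
  Un_cv U l -> (forall n, U n <= c) -> l <= c.
Proof.
  intros HU Hc. apply (Rle_cv_lim Hc HU).
  intros eps Heps. exists 0%nat. intros n _. rewrite Rdist_eq. exact Heps.
Qed.

Section Expansion.

Variables (b : nat) (w : nat -> nat).
Hypothesis digit_lt : forall k, (w k < b)%nat.

Fixpoint window (n k : nat) : nat :=
  match k with
  | O => O
  | S k' => w n * b ^ k' + window (S n) k'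
  end.

Lemma window_lt n k : (window n k < b ^ k)%nat.
Proof.
  revert n; induction k as [|k IH]; intros n; simpl; [lia|].
  specialize (IH (S n)). specialize (digit_lt n). nia.
Qed.

Lemma window_eq_digits n n' k :
  window n k = window n' k -> forall j, (j < k)%nat -> w (n + j) = w (n' + j).
Proof.
  revert n n'; induction k as [|k IH]; intros n n' E j Hj; [lia|].
  simpl in E.
  destruct (Nat.div_mod_unique (b ^ k) (w n) (w n') _ _
              (window_lt (S n) k) (window_lt (S n') k)) as [Ehead Etail]; [lia|].
  destruct j as [|j].
  - rewrite !Nat.add_0_r. exact Ehead.
  - rewrite <- !Nat.add_succ_comm. apply IH; [exact Etail | lia].
Qed.

Variable alpha : R.

Fixpoint partial_sum (n : nat) : R :=
  match n with
  | O => 0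
  | S k => partial_sum k + INR (w k) / INR b ^ (k + 1)
  end.

Definition scaled_tail (n : nat) : R := INR b ^ n * (alpha - partial_sum n).

Lemma INR_b_pos : 0 < INR b.
Proof. apply lt_0_INR. specialize (digit_lt 0). lia. Qed.

Lemma scaled_tail_succ n : scaled_tail (S n) = INR b * scaled_tail n - INR (w n).
Proof.
  unfold scaled_tail. cbn [partial_sum]. rewrite Nat.add_1_r. cbn [pow].
  pose proof INR_b_pos. assert (INR b ^ n <> 0) by (apply pow_nonzero; lra).
  field. split; lra.
Qed.

Lemma scaled_tail_shift n k : scaled_tail n * INR b ^ k = INR (window n k) + scaled_tail (n + k).
Proof.
  revert n; induction k as [|k IH]; intros n.
  - rewrite Nat.add_0_r. simpl. lra.
  - cbn [window pow]. rewrite plus_INR, mult_INR, pow_INR, <- Nat.add_succ_comm.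
    rewrite Rplus_assoc, <- IH, scaled_tail_succ. ring.
Qed.

Lemma partial_sum_mono n M : (n <= M)%nat -> partial_sum n <= partial_sum M.
Proof.
  induction 1 as [|M _ IH]; [lra|]. cbn [partial_sum].
  assert (0 <= INR (w M) / INR b ^ (M + 1)).
  { apply Rmult_le_pos; [apply pos_INR|].
    left. apply Rinv_0_lt_compat, pow_lt, INR_b_pos. }
  lra.
Qed.

Lemma partial_sum_add_inv_pow_antimono n M : (n <= M)%nat ->
  partial_sum M + / INR b ^ M <= partial_sum n + / INR b ^ n.
Proof.
  induction 1 as [|M _ IH]; [lra|]. cbn [partial_sum].
  pose proof INR_b_pos. assert (0 < INR b ^ M) by (apply pow_lt; lra).
  assert (Hw : INR (w M) + 1 <= INR b).
  { rewrite <- S_INR. apply le_INR, digit_lt. }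
  assert (E : partial_sum M + / INR b ^ M
              - (partial_sum M + INR (w M) / INR b ^ (M + 1) + / INR b ^ S M)
              = (INR b - 1 - INR (w M)) * / (INR b * INR b ^ M)).
  { rewrite Nat.add_1_r. cbn [pow]. field. split; lra. }
  assert (0 <= (INR b - 1 - INR (w M)) * / (INR b * INR b ^ M)).
  { apply Rmult_le_pos; [lra|]. left. apply Rinv_0_lt_compat, Rmult_lt_0_compat; lra. }
  lra.
Qed.

Lemma partial_sum_le_add_inv_pow n M : partial_sum M <= partial_sum n + / INR b ^ n.
Proof.
  assert (0 < / INR b ^ n) by apply Rinv_0_lt_compat, pow_lt, INR_b_pos.
  assert (0 < / INR b ^ M) by apply Rinv_0_lt_compat, pow_lt, INR_b_pos.
  destruct (Nat.le_ge_cases n M) as [Hle|Hge].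
  - pose proof (partial_sum_add_inv_pow_antimono n M Hle). lra.
  - pose proof (partial_sum_mono M n Hge). lra.
Qed.

Hypothesis alpha_sum : infinite_sum (fun k => INR (w k) / INR b ^ (k + 1)) alpha.

Lemma sum_f_R0_partial_sum n :
  sum_f_R0 (fun k => INR (w k) / INR b ^ (k + 1)) n = partial_sum (S n).
Proof. induction n as [|n IH]; simpl; [lra|]. rewrite IH. reflexivity. Qed.

Lemma partial_sum_le_alpha n : partial_sum n <= alpha.
Proof.
  apply Rle_trans with (partial_sum (S n)); [apply partial_sum_mono; lia|].
  rewrite <- sum_f_R0_partial_sum. apply sum_incr; [exact alpha_sum|].
  intros k. apply Rmult_le_pos; [apply pos_INR|].
  left. apply Rinv_0_lt_compat, pow_lt, INR_b_pos.
Qed.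

Lemma alpha_le_partial_sum n : alpha <= partial_sum n + / INR b ^ n.
Proof.
  apply (Un_cv_le_const _ _ _ alpha_sum). intros M.
  rewrite sum_f_R0_partial_sum. apply partial_sum_le_add_inv_pow.
Qed.

Lemma scaled_tail_range n : 0 <= scaled_tail n <= 1.
Proof.
  pose proof (partial_sum_le_alpha n). pose proof (alpha_le_partial_sum n).
  assert (0 < INR b ^ n) by apply pow_lt, INR_b_pos.
  unfold scaled_tail. split.
  - apply Rmult_le_pos; lra.
  - replace 1 with (INR b ^ n * / INR b ^ n) by (field; lra).
    apply Rmult_le_compat_l; lra.
Qed.

Lemma scaled_tail_eq_1 n : scaled_tail n = 1 -> scaled_tail (S n) = 1 /\ w n = (b - 1)%nat.
Proof.
  intros H. pose proof (scaled_tail_range (S n)) as [_ Hle].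
  rewrite scaled_tail_succ, H in Hle |- *.
  assert (Hw : INR (w n) + 1 <= INR b) by (rewrite <- S_INR; apply le_INR, digit_lt).
  assert (E : INR (S (w n)) = INR b) by (rewrite S_INR; lra).
  apply INR_eq in E. split; [lra | lia].
Qed.

Lemma scaled_tail_lt_1 n : ~ (forall k, (n <= k)%nat -> w k = (b - 1)%nat) -> scaled_tail n < 1.
Proof.
  intros Hnot. destruct (scaled_tail_range n) as [_ [Hlt|Heq]]; [exact Hlt|].
  exfalso. apply Hnot.
  assert (Hall : forall k, scaled_tail (n + k) = 1).
  { induction k as [|k IH]; [rewrite Nat.add_0_r; exact Heq|].
    rewrite <- Nat.add_succ_comm. apply scaled_tail_eq_1, IH. }
  intros k Hk. replace k with (n + (k - n))%nat by lia. apply scaled_tail_eq_1, Hall.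
Qed.

Lemma frac_pow_mul_alpha n :
  ~ (forall k, (n <= k)%nat -> w k = (b - 1)%nat) -> frac (INR b ^ n * alpha) = scaled_tail n.
Proof.
  intros Hnot.
  assert (E : INR b ^ n * alpha = IZR (Z.of_nat (window 0 n)) + scaled_tail n).
  { rewrite <- INR_IZR_INZ, <- scaled_tail_shift. unfold scaled_tail. simpl. ring. }
  symmetry. apply (Int_part_frac_part_spec _ _ _ (conj (proj1 (scaled_tail_range n)) (scaled_tail_lt_1 n Hnot)) E).
Qed.

End Expansion.

Lemma debruijn_prefix_exists b w :
  infinite_debruijn b w -> forall K, exists m, (K <= m)%nat /\ debruijn_prefix b w m.
Proof.
  intros [_ Hdb] K. exists (2 * K + 1)%nat. split; [lia|].
  destruct (Nat.eqb b 2); apply Hdb; auto.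
  apply Nat.odd_spec. exists K. lia.
Qed.

Lemma nth_map_seq (g : nat -> nat) m j : (j < m)%nat -> nth j (map g (seq 0 m)) 0%nat = g j.
Proof.
  intros Hj. rewrite (nth_indep _ 0%nat (g 0%nat)) by (rewrite length_map, length_seq; lia).
  rewrite map_nth, seq_nth by lia. reflexivity.
Qed.

Lemma debruijn_window_unique b w m n n' :
  debruijn_prefix b w m -> (n < b ^ m)%nat -> (n' < b ^ m)%nat ->
  (forall j, (j < m)%nat -> w (n + j)%nat = w (n' + j)%nat) -> n = n'.
Proof.
  intros [Hdigit Huniq] Hn Hn' Hwin.
  destruct (Huniq (map (fun j => w (n + j)%nat) (seq 0 m))) as [i [_ Hi]].
  - rewrite length_map, length_seq. reflexivity.
  - apply Forall_forall. intros y Hy. apply in_map_iff in Hy as [j [<- Hj]].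
    apply in_seq in Hj. apply Hdigit. lia.
  - assert (i = n) by (apply Hi; split; [lia|]; intros j Hj; rewrite nth_map_seq; auto).
    assert (i = n') by (apply Hi; split; [lia|]; intros j Hj; rewrite nth_map_seq; auto; symmetry; auto).
    lia.
Qed.

Lemma debruijn_not_eventually_const b w d n0 :
  (2 <= b)%nat -> infinite_debruijn b w -> ~ (forall k, (n0 <= k)%nat -> w k = d).
Proof.
  intros Hb Hdb Hconst.
  destruct (debruijn_prefix_exists b w Hdb (n0 + 2)) as [m [Hm Hpre]].
  pose proof (Nat.pow_gt_lin_r b m Hb).
  assert (n0 = S n0); [|lia].
  apply (debruijn_window_unique b w m); [exact Hpre | lia | lia |].
  intros j _. rewrite !Hconst by lia. reflexivity.
Qed.

Theorem theorem2 (b : nat) (w : nat -> nat) (alpha : R) :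
  (2 <= b)%nat ->
  infinite_debruijn b w ->
  infinite_sum (fun k : nat => INR (w k) / INR b ^ (k + 1)) alpha ->
  ~ poissonian_pc (fun n : nat => frac (INR b ^ n * alpha)).
Proof.
  intros Hb Hdb Hsum HP. pose proof (proj1 Hdb) as Hw.
  assert (Hx : forall n, frac (INR b ^ n * alpha) = scaled_tail b w alpha n).
  { intros n. apply (frac_pow_mul_alpha b w Hw alpha Hsum).
    apply (debruijn_not_eventually_const b); assumption. }
  destruct (HP (1/2) ltac:(lra) (1/10) ltac:(lra)) as [N1 HN1].
  destruct (HP (9/10) ltac:(lra) (1/10) ltac:(lra)) as [N2 HN2].
  destruct (debruijn_prefix_exists b w Hdb (N1 + N2)) as [m [Hm Hpre]].
  pose proof (Nat.pow_gt_lin_r b m Hb).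
  specialize (HN1 (b ^ m)%nat ltac:(lia)). specialize (HN2 (b ^ m)%nat ltac:(lia)).
  unfold Rdist in HN1, HN2. apply Rabs_def2 in HN1, HN2.
  destruct (one_point_per_cell_pair_correlation (b ^ m) (fun n => frac (INR b ^ n * alpha))
              (fun n => window b w n m) (fun n => scaled_tail b w alpha (n + m))); try lra.
  - lia.
  - intros n _. apply window_lt, Hw.
  - intros n n' Hn Hn' E. apply (debruijn_window_unique b w m); try assumption.
    apply (window_eq_digits b w Hw _ _ _ E).
  - intros n _. rewrite Hx, pow_INR. apply scaled_tail_shift, Hw.
  - intros n _. split; [apply scaled_tail_range; assumption|].
    apply scaled_tail_lt_1; try assumption. apply (debruijn_not_eventually_const b); assumption.
Qed.
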